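(* Let $(\Gamma,\psi)$ be an $H$-asymptotic couple with asymptotic integration and let $\gamma\in(\Gamma^{>})'$. Then $\int\gamma>-\int s(\gamma)=-\chi(\int\gamma)>0$. Furthermore, if $\gamma_0,\gamma_1\in(\Gamma^{>})'$ and $\gamma_0\le\gamma_1$, then $-\int s(\gamma_0)\le-\int s(\gamma_1)$.
   Context: An asymptotic couple is a pair $(\Gamma,\psi)$ with $\Gamma$ an ordered abelian group and $\psi:\Gamma\setminus\{0\}\to\Gamma$ such that for all nonzero $\alpha,\beta$: $\alpha+\beta\ne0\Rightarrow\psi(\alpha+\beta)\ge\min(\psi(\alpha),\psi(\beta))$; $\psi(k\alpha)=\psi(\alpha)$ for $k\in\mathbb{Z}\setminus\{0\}$; $\alpha>0\Rightarrow\alpha+\psi(\alpha)>\psi(\beta)$. $H$-asymptotic: $0<\alpha\le\beta\Rightarrow\psi(\alpha)\ge\psi(\beta)$. Write $\gamma'=\gamma+\psi(\gamma)$ for $\gamma\ne0$, $(\Gamma^{>})'=\{\gamma':\gamma>0\}$. Asymptotic integration: every $\alpha\in\Gamma$ equals $\gamma'$ for a (necessarily unique) $\gamma\ne0$, denoted $\int\alpha$. Successor function $s(\alpha)=\psi(\int\alpha)$; contraction map $\chi(\alpha)=\int\psi(\alpha)$ for $\alpha\ne0$, $\chi(0)=0$. *)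

From mathcomp Require Import all_boot all_order all_algebra.
From Stdlib Require Import ClassicalEpsilon.
Set Implicit Arguments. Unset Strict Implicit. Unset Printing Implicit Defensive.
Import GRing.Theory.
Local Open Scope ring_scope.

Definition oag_axioms (G : zmodType) (le : rel G) : Prop :=
  [/\ forall x, le x x,
      forall x y, le x y -> le y x -> x = y,
      forall x y z, le x y -> le y z -> le x z,
      forall x y, le x y || le y x
    & forall x y z, le x y -> le (x + z) (y + z)].

Definition ltr (G : zmodType) (le : rel G) (x y : G) : bool := le x y && (x != y).

(* Asymptotic couple (Gamma, psi); psi is given as a total function G -> G,
   its value at 0 is irrelevant (never used).
   "psi(a+b) >= min(psi a, psi b)" is written out for the total order le. *)
Definition asymptotic_couple (G : zmodType) (le : rel G) (psi : G -> G) : Prop :=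
  [/\ oag_axioms le,
      forall a b : G, a != 0 -> b != 0 -> a + b != 0 ->
        le (psi a) (psi (a + b)) || le (psi b) (psi (a + b)),
      forall (a : G) (k : int), a != 0 -> k != 0 -> psi (a *~ k) = psi a
    & forall a b : G, a != 0 -> b != 0 -> ltr le 0 a -> ltr le (psi b) (a + psi a)].

Definition H_asymptotic (G : zmodType) (le : rel G) (psi : G -> G) : Prop :=
  forall a b : G, ltr le 0 a -> le a b -> le (psi b) (psi a).

Definition deriv (G : zmodType) (psi : G -> G) (g : G) : G := g + psi g.

Definition pos_derivs (G : zmodType) (le : rel G) (psi : G -> G) (a : G) : Prop :=
  exists g, ltr le 0 g /\ a = deriv psi g.

Definition has_asymptotic_integration (G : zmodType) (psi : G -> G) : Prop :=
  forall a : G, exists g : G, g != 0 /\ deriv psi g = a.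

(* int a: some (under asymptotic integration, the unique) nonzero g with g' = a. *)
Definition integ (G : zmodType) (psi : G -> G) (a : G) : G :=
  epsilon (inhabits (0 : G)) (fun g => g != 0 /\ deriv psi g = a).

Definition succ_fun (G : zmodType) (psi : G -> G) (a : G) : G := psi (integ psi a).

Definition contraction (G : zmodType) (psi : G -> G) (a : G) : G :=
  if a == 0 then 0 else integ psi (psi a).

From Pilot Require Import Defs.
From mathcomp Require Import all_boot all_order all_algebra.
From Stdlib Require Import ClassicalEpsilon.
Import GRing.Theory.
Local Open Scope ring_scope.
Set Implicit Arguments. Unset Strict Implicit.

(* In an asymptotic couple the map g |-> g' is strictly increasing
   on nonzero elements, so with asymptotic integration [integ] is its
   increasing inverse.  For a := int gamma > 0 put b := int (psi a), so that
   b' = psi a.  If b > 0 then the axiom psi a < b + psi b = psi a fails, hence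
   b < 0.  If a <= -b then H-asymptoticity gives psi b = psi (-b) <= psi a =
   b + psi b, i.e. b >= 0, which is absurd; hence -b < a.  Monotonicity of
   -int s follows by composing int (increasing), psi (decreasing on positive
   elements) and int again. *)

Section OrderedGroup.
Variables (G : zmodType) (le : rel G).
Hypothesis oag : oag_axioms le.

Lemma oag_refl x : le x x. Proof. by case: oag. Qed.

Lemma oag_anti x y : le x y -> le y x -> x = y.
Proof. by case: oag => _ anti _ _ _; apply: anti. Qed.

Lemma oag_trans x y z : le x y -> le y z -> le x z.
Proof. by case: oag => _ _ trans _ _; apply: trans. Qed.

Lemma oag_total x y : le x y || le y x. Proof. by case: oag. Qed.

Lemma oag_leD2r x y z : le (x + z) (y + z) = le x y.
Proof.
case: oag => _ _ _ _ mono; apply/idP/idP; last exact: mono.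
by move=> /(mono _ _ (- z)); rewrite !addrK.
Qed.

Lemma oag_leD2l x y z : le (z + x) (z + y) = le x y.
Proof. by rewrite ![z + _]addrC oag_leD2r. Qed.

Lemma oag_leN2 x y : le (- x) (- y) = le y x.
Proof. by rewrite -(oag_leD2r (- x) _ (x + y)) addKr [x + y]addrC addKr. Qed.

Lemma oag_ltNge x y : ltr le x y = ~~ le y x.
Proof.
rewrite /ltr; apply/andP/idP => [[xy /eqP nxy] | nyx]; last first.
  have := oag_total x y; rewrite (negbTE nyx) orbF => xy.
  by split=> //; apply: contraNneq nyx => ->; rewrite oag_refl.
by apply/negP => yx; apply: nxy; apply: oag_anti.
Qed.

Lemma oag_leNgt x y : le x y = ~~ ltr le y x.
Proof. by rewrite oag_ltNge negbK. Qed.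

Lemma oag_lt_le_trans x y z : ltr le x y -> le y z -> ltr le x z.
Proof.
rewrite !oag_ltNge => nyx yz; apply: contra nyx => zx; exact: oag_trans yz zx.
Qed.

Lemma oag_le_lt_trans x y z : le x y -> ltr le y z -> ltr le x z.
Proof.
rewrite !oag_ltNge => xy nzy; apply: contra nzy => zx; exact: oag_trans zx xy.
Qed.

Lemma oag_ltD2l x y z : ltr le (z + x) (z + y) = ltr le x y.
Proof. by rewrite !oag_ltNge oag_leD2l. Qed.

Lemma oag_oppr_gt0 x : ltr le 0 (- x) = ltr le x 0.
Proof. by rewrite !oag_ltNge -oppr0 oag_leN2 oppr0. Qed.

Lemma oag_lt_neq0 x : ltr le 0 x -> x != 0.
Proof. by case/andP => _; rewrite eq_sym. Qed.

End OrderedGroup.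

Section AsymptoticCouple.
Variables (G : zmodType) (le : rel G) (psi : G -> G).
Hypothesis couple : asymptotic_couple le psi.

Let oag : oag_axioms le. Proof. by case: couple. Qed.

Lemma psiN b : b != 0 -> psi (- b) = psi b.
Proof. by case: couple => _ _ psiZ _ b0; rewrite -(psiZ b (-1) b0 isT) mulrN1z. Qed.

Lemma deriv_lt a b : a != 0 -> b != 0 -> ltr le a b ->
  ltr le (Defs.deriv psi a) (Defs.deriv psi b).
Proof.
move=> a0 b0 ab; case: couple => _ psi_min _ psi_lt_deriv; rewrite /Defs.deriv.
set d := b - a; have bE : b = a + d by rewrite /d addrC subrK.
have d_gt0 : ltr le 0 d by rewrite -(oag_ltD2l oag _ _ a) addr0 -bE.
have d0 := oag_lt_neq0 d_gt0.
have ad0 : a + d != 0 by rewrite -bE.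
have [psi_ab | psi_ba] := boolP (le (psi a) (psi b)).
  apply: (oag_le_lt_trans oag (y := a + psi b)); first by rewrite (oag_leD2l oag).
  by rewrite ![_ + psi b]addrC (oag_ltD2l oag).
(* psi b < psi a, so the valuation axiom for b = a + d forces psi d <= psi b *)
have psi_db : le (psi d) (psi b).
  by have := psi_min a d a0 d0 ad0; rewrite -bE (negbTE psi_ba) orFb.
have : ltr le (psi a) (d + psi b).
  by apply: (oag_lt_le_trans oag) (psi_lt_deriv d a d0 a0 d_gt0) _; rewrite (oag_leD2l oag).
by rewrite -(oag_ltD2l oag _ _ a) addrA -bE.
Qed.

Lemma deriv_ltE a b : a != 0 -> b != 0 ->
  ltr le (Defs.deriv psi a) (Defs.deriv psi b) = ltr le a b.
Proof.
move=> a0 b0; apply/idP/idP; last exact: deriv_lt.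
apply: contraLR; rewrite -!(oag_leNgt oag) => ba.
have [-> | ba_neq] := eqVneq b a; first exact: (oag_refl oag).
by case/andP: (deriv_lt b0 a0 (introT andP (conj ba ba_neq))).
Qed.

Lemma deriv_leE a b : a != 0 -> b != 0 ->
  le (Defs.deriv psi a) (Defs.deriv psi b) = le a b.
Proof. by move=> a0 b0; rewrite !(oag_leNgt oag) deriv_ltE. Qed.

Lemma deriv_inj a b : a != 0 -> b != 0 -> Defs.deriv psi a = Defs.deriv psi b -> a = b.
Proof.
by move=> a0 b0 ab; apply: (oag_anti oag); rewrite -deriv_leE // ab (oag_refl oag).
Qed.

Section Integration.
Hypothesis integration : has_asymptotic_integration psi.

Lemma integ_spec a : integ psi a != 0 /\ Defs.deriv psi (integ psi a) = a.
Proof.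
have [g g_spec] := integration a.
by apply: (epsilon_spec (inhabits 0) (fun g => g != 0 /\ Defs.deriv psi g = a)); exists g.
Qed.

Lemma integ_neq0 a : integ psi a != 0. Proof. by case: (integ_spec a). Qed.

Lemma deriv_integ a : Defs.deriv psi (integ psi a) = a. Proof. by case: (integ_spec a). Qed.

Lemma integ_deriv g : g != 0 -> integ psi (Defs.deriv psi g) = g.
Proof. by move=> g0; apply: deriv_inj; rewrite ?integ_neq0 ?deriv_integ. Qed.

Lemma integ_leE a b : le (integ psi a) (integ psi b) = le a b.
Proof. by rewrite -deriv_leE ?integ_neq0 // !deriv_integ. Qed.

Lemma integ_pos_derivs_gt0 gam : pos_derivs le psi gam -> ltr le 0 (integ psi gam).
Proof. by case=> g [g_gt0 ->]; rewrite integ_deriv // (oag_lt_neq0 g_gt0). Qed.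

Lemma integ_psi_lt0 a : ltr le 0 a -> ltr le (integ psi (psi a)) 0.
Proof.
move=> a_gt0; set b := integ psi (psi a).
rewrite (oag_ltNge oag); apply/negP => b_ge0.
have b_gt0 : ltr le 0 b by rewrite /ltr b_ge0 eq_sym integ_neq0.
case: couple => _ _ _ psi_lt_deriv.
have := psi_lt_deriv b a (integ_neq0 _) (oag_lt_neq0 a_gt0) b_gt0.
by rewrite -/(Defs.deriv psi b) deriv_integ /ltr eqxx andbF.
Qed.

Hypothesis H_asym : H_asymptotic le psi.

Lemma opp_integ_psi_lt a : ltr le 0 a -> ltr le (- integ psi (psi a)) a.
Proof.
move=> a_gt0; set b := integ psi (psi a).
have b_lt0 : ltr le b 0 := integ_psi_lt0 a_gt0.
rewrite (oag_ltNge oag); apply/negP => a_le_Nb.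
have := H_asym a_gt0 a_le_Nb; rewrite psiN ?integ_neq0 //.
rewrite -(deriv_integ (psi a)) -/b /Defs.deriv -{1}(add0r (psi b)) (oag_leD2r oag).
by apply/negP; rewrite -(oag_ltNge oag).
Qed.

Lemma opp_integ_psi_le a b : ltr le 0 a -> le a b ->
  le (- integ psi (psi a)) (- integ psi (psi b)).
Proof. by move=> a_gt0 ab; rewrite (oag_leN2 oag) integ_leE; apply: H_asym. Qed.

End Integration.
End AsymptoticCouple.

Theorem lemma3p13 (G : zmodType) (le : rel G) (psi : G -> G) :
  asymptotic_couple le psi -> H_asymptotic le psi ->
  has_asymptotic_integration psi ->
  (forall gamma : G, pos_derivs le psi gamma ->
     [/\ ltr le (- integ psi (succ_fun psi gamma)) (integ psi gamma),
         - integ psi (succ_fun psi gamma) = - contraction psi (integ psi gamma)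
       & ltr le 0 (- integ psi (succ_fun psi gamma))]) /\
  (forall gamma0 gamma1 : G, pos_derivs le psi gamma0 -> pos_derivs le psi gamma1 ->
     le gamma0 gamma1 ->
     le (- integ psi (succ_fun psi gamma0)) (- integ psi (succ_fun psi gamma1))).
Proof.
move=> couple H_asym integration; have oag : oag_axioms le by case: couple.
rewrite /succ_fun; split=> [gam gam_pos | gam0 gam1 gam0_pos _ gam01].
  have a_gt0 := integ_pos_derivs_gt0 couple integration gam_pos.
  split; first exact: opp_integ_psi_lt.
    by rewrite /contraction (negbTE (integ_neq0 integration _)).
  by rewrite (oag_oppr_gt0 oag); apply: integ_psi_lt0.
apply: opp_integ_psi_le => //; first exact: integ_pos_derivs_gt0 gam0_pos.
by rewrite integ_leE.
Qed.
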